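(* Let $X$ be a space and consider: (1) $\mathsf{EC}(X,\mathbb{R})$ holds; (2) $\mathsf{EC}(X,Y)$ holds for every metric space $Y$; (3a) $X$ satisfies $\mathsf{I0}$; (3b) the intersection of any two non-Lindelöf $0$-sets of $X$ is non-Lindelöf; (4a) $X$ satisfies $\mathsf{IC}$; (4b) the intersection of any two closed non-Lindelöf subsets of $X$ is non-Lindelöf. Then (1)$\Leftrightarrow$(2)$\Leftrightarrow$(3a)$\Leftarrow$(3b)$\Leftarrow$(4a)$\Leftrightarrow$(4b). Moreover, if $X$ is Tychonoff then (3a)$\Leftrightarrow$(3b), and if $X$ is normal then all six properties are equivalent.
   Context: All spaces are Hausdorff and maps continuous. For a non-Lindelöf space $X$ and a space $Y$, $\mathsf{EC}(X,Y)$ means: for every continuous $f:X\to Y$ there is a Lindelöf $Z\subset X$ such that $f(X\setminus Z)$ is a singleton (for Lindelöf $X$ the property is regarded as trivially true). A $0$-set of $X$ is a set $g^{-1}(\{0\})$ for some continuous $g:X\to[0,1]$. $X$ satisfies $\mathsf{IC}$ (resp. $\mathsf{I0}$) if of any two disjoint closed subsets (resp. $0$-sets) of $X$ at least one is Lindelöf. *)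

From HB Require Import structures.
From mathcomp Require Import all_boot all_order all_algebra.
From mathcomp Require Import all_classical all_reals all_analysis.
Set Implicit Arguments. Unset Strict Implicit. Unset Printing Implicit Defensive.
Import Order.TTheory GRing.Theory Num.Theory.
Import numFieldNormedType.Exports.
Local Open Scope classical_set_scope.
Local Open Scope ring_scope.

Definition lindelof {X : topologicalType} (A : set X) : Prop :=
  forall (I : Type) (U : I -> set X), (forall i, open (U i)) ->
    A `<=` \bigcup_(i in [set: I]) U i ->
    exists J : set I, countable J /\ A `<=` \bigcup_(i in J) U i.

Definition EC (X Y : topologicalType) : Prop :=
  lindelof [set: X] \/
  forall f : X -> Y, continuous f ->
    exists Z : set X, lindelof Z /\ exists y : Y, f @` (~` Z) = [set y].

Definition zero_set (R : realType) {X : topologicalType} (A : set X) : Prop :=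
  exists g : X -> R, continuous g /\ (forall x, 0 <= g x <= 1) /\
    A = g @^-1` [set 0].

Definition IC (X : topologicalType) : Prop :=
  forall A B : set X, closed A -> closed B -> A `&` B = set0 ->
    lindelof A \/ lindelof B.

Definition I0 (R : realType) (X : topologicalType) : Prop :=
  forall A B : set X, zero_set R A -> zero_set R B -> A `&` B = set0 ->
    lindelof A \/ lindelof B.

Definition zero_sets_meet_nonlindelof (R : realType) (X : topologicalType) :=
  forall A B : set X, zero_set R A -> zero_set R B ->
    ~ lindelof A -> ~ lindelof B -> ~ lindelof (A `&` B).

Definition closed_sets_meet_nonlindelof (X : topologicalType) :=
  forall A B : set X, closed A -> closed B ->
    ~ lindelof A -> ~ lindelof B -> ~ lindelof (A `&` B).

(* Metric space over R: a Hausdorff pseudometric space. *)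
Definition EC_all_metric (R : realType) (X : topologicalType) : Prop :=
  forall Y : pseudoMetricType R, hausdorff_space Y -> EC X Y.

Definition tychonoff_space (R : realType) (X : topologicalType) : Prop :=
  hausdorff_space X /\
  forall (x : X) (B : set X), closed B -> ~ B x ->
    exists f : X -> R, continuous f /\ (forall y, 0 <= f y <= 1) /\
      f x = 0 /\ (forall y, B y -> f y = 1).

From HB Require Import structures.
From mathcomp Require Import all_boot all_order all_algebra.
From mathcomp Require Import all_classical all_reals all_analysis.
From mathcomp Require Import lra.
Import numFieldNormedType.Exports.
Set Implicit Arguments. Unset Strict Implicit. Unset Printing Implicit Defensive.
Import Order.TTheory GRing.Theory Num.Theory.
Local Open Scope classical_set_scope.
Local Open Scope ring_scope.

(** The heart is (3a) => (2).  Let f : X -> Y be continuous into a metric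
   space, X not Lindelöf.  Urysohn functions on Y turn two disjoint closed
   sets of Y into disjoint zero-sets of X, so by I0 one of their preimages is
   Lindelöf.  For r > 0 some y has f^-1(Y \ B(y,r)) Lindelöf: otherwise
   every small closed ball has Lindelöf preimage, hence a maximal separated
   net of f(X) is uncountable, and two uncountable halves of it have disjoint
   closures with non-Lindelöf preimages.  Outside the countable union Z of
   these Lindelöf sets for r = 1/(n+1), f takes values in balls of radii
   tending to 0, so it is constant.
   Conversely, under EC(X,R) a non-Lindelöf zero-set has Lindelöf complement,
   which gives (3b); and under IC, two closed sets whose intersection is
   Lindelöf become disjoint after removing a countable subcover of the
   intersection from each of them. *)

Lemma countableU T (A B : set T) :
  countable A -> countable B -> countable (A `|` B).
Proof.
move=> cA cB; rewrite -bigcup2E.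
apply: bigcup_countable => [|[|[|i]] _ //=]; exact: countableP.
Qed.

Lemma subset1_countable T (A : set T) : is_subset1 A -> countable A.
Proof.
move=> A1; have [->|/set0P[a Aa]] := eqVneq A set0; first exact: countable0.
by apply: sub_countable (countable1 a); apply: subset_card_le => b /A1; apply.
Qed.

Lemma exists_maximal_pairwise T (S : set T) (r : T -> T -> Prop) :
  exists D, [/\ D `<=` S, (forall a b, D a -> D b -> a <> b -> r a b) &
    forall x, S x -> (forall a, D a -> a <> x -> r a x /\ r x a) -> D x].
Proof.
pose P D := D `<=` S /\ forall a b, D a -> D b -> a <> b -> r a b.
have [D [[DS Dr] Dmax]] : exists D, P D /\ forall B, D `<` B -> ~ P B.
  apply: Zorn_bigcup => F FP Ftot; split.
    by move=> a [B FB Ba]; apply: (proj1 (FP B FB)).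
  move=> a b [B1 F1 B1a] [B2 F2 B2b].
  have [B12|B21] := Ftot _ _ F1 F2.
    by apply: (proj2 (FP B2 F2)) => //; apply: B12.
  by apply: (proj2 (FP B1 F1)) => //; apply: B21.
exists D; split => // x Sx xr; apply: contrapT => nDx.
apply: (Dmax (x |` D)).
  by split=> [a Da|/(_ x (or_introl erefl))//]; right.
split=> [a [->|/DS]//|a b [->|Da] [->|Db] ab //].
- exact: (xr b Db (nesym ab)).2.
- exact: (xr a Da ab).1.
- exact: Dr.
Qed.

Lemma split_uncountable T (D : set T) : ~ countable D ->
  exists E, [/\ E `<=` D, ~ countable E & ~ countable (D `\` E)].
Proof.
move=> nD.
(* A maximal family M of disjoint pairs leaves at most one point of D
   uncovered, and the first coordinates of M form one half. *)
pose disjoint_pairs (p q : T * T) :=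
  [/\ p.1 <> q.1, p.1 <> q.2, p.2 <> q.1 & p.2 <> q.2].
have [M [MD Mdisj Mmax]] := exists_maximal_pairwise
  [set p : T * T | [/\ D p.1, D p.2 & p.1 <> p.2]] disjoint_pairs.
have Meq p q : M p -> M q -> ~ disjoint_pairs p q -> p = q.
  by move=> Mp Mq npq; apply: contrapT => /(Mdisj p q Mp Mq).
have cM_fst : countable (fst @` M) = countable M.
  apply/eq_countable/inj_card_eq => p q /set_mem Mp /set_mem Mq pq.
  by apply: Meq => // -[].
have cM_snd : countable (snd @` M) = countable M.
  apply/eq_countable/inj_card_eq => p q /set_mem Mp /set_mem Mq pq.
  by apply: Meq => // -[].
have uncovered1 : is_subset1 (D `\` (fst @` M `|` snd @` M)).
  move=> a b [Da naM] [Db nbM]; apply: contrapT => ab; apply: (naM); left.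
  exists (a, b) => //; apply: Mmax => [//|p Mp _].
  have fresh c : ~ (fst @` M `|` snd @` M) c -> p.1 <> c /\ p.2 <> c.
    by move=> ncM; split=> pc; apply: ncM; [left|right]; exists p.
  have [[pa1 pa2] [pb1 pb2]] := (fresh a naM, fresh b nbM).
  by split; split=> // /esym.
have cMD : countable M -> countable D.
  move=> cM; set C := fst @` M `|` snd @` M.
  have DC : D `<=` C `|` (D `\` C).
    by move=> a Da; have [Ca|nCa] := pselect (C a); [left|right].
  apply: sub_countable (subset_card_le DC) _.
  apply: countableU (subset1_countable uncovered1).
  by apply: countableU; rewrite ?cM_fst ?cM_snd.
have sndD : snd @` M `<=` D `\` fst @` M.
  move=> _ [q Mq <-]; have [_ Dq2 q12] := MD q Mq; split=> // -[p Mp pq].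
  have epq : p = q by apply: Meq => // -[_ /(_ pq)].
  by apply: q12; rewrite -pq epq.
exists (fst @` M); split.
- by move=> _ [p Mp <-]; have [] := MD p Mp.
- by rewrite cM_fst => /cMD.
- move=> cDE; apply/nD/cMD; rewrite -cM_snd.
  exact: sub_countable (subset_card_le sndD) cDE.
Qed.

Section lindelof.
Context {X : topologicalType}.
Implicit Types A B : set X.

Lemma lindelof0 : lindelof (@set0 X).
Proof. by move=> I U _ _; exists set0; split; [exact: countable0|]. Qed.

Lemma subclosed_lindelof A B : closed A -> lindelof B -> A `<=` B -> lindelof A.
Proof.
move=> cA LB AB I U oU AU.
pose V (o : option I) := if o is Some i then U i else ~` A.
have oV o : open (V o) by case: o => [i|] /=; [exact: oU|exact: closed_openC].
have [|J [cJ BJ]] := LB _ V oV.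
  move=> x _; have [Ax|nAx] := pselect (A x); last by exists None.
  by have [i _ Ui] := AU x Ax; exists (Some i).
exists (Some @^-1` J); split.
  by apply: sub_countable cJ; apply: card_ge_preimage => a b _ _ [].
by move=> x Ax; have [[i|] Ji Vi] := BJ x (AB x Ax); first by exists i.
Qed.

Lemma bigcup_lindelof (K : Type) (D : set K) (F : K -> set X) :
  countable D -> (forall k, D k -> lindelof (F k)) ->
  lindelof (\bigcup_(k in D) F k).
Proof.
move=> cD LF I U oU FU.
have subcover k : exists J : set I,
    D k -> countable J /\ F k `<=` \bigcup_(i in J) U i.
  have [Dk|nDk] := pselect (D k); last by exists set0.
  have [J JF] := LF k Dk I U oU (subset_trans (bigcup_sup Dk) FU).
  by exists J.
have [G HG] := choice subcover.
exists (\bigcup_(k in D) G k); split.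
  by apply: bigcup_countable => // k Dk; case: (HG k Dk).
move=> x [k Dk Fkx]; have [_ /(_ x Fkx) [i Gi Ui]] := HG k Dk.
by exists i => //; exists k.
Qed.

Lemma lindelofU A B : lindelof A -> lindelof B -> lindelof (A `|` B).
Proof.
move=> LA LB; rewrite -bigcup2E.
apply: bigcup_lindelof => [|[|[|i]] _ //=]; first exact: countableP.
exact: lindelof0.
Qed.

Lemma lindelof_cover_setD A (I : Type) (U : I -> set X) (J : set I) :
  (forall i, open (U i)) -> A `<=` \bigcup_(i in [set: I]) U i ->
  countable J -> lindelof (A `\` \bigcup_(i in J) U i) ->
  exists J', countable J' /\ A `<=` \bigcup_(i in J') U i.
Proof.
move=> oU AU cJ LA.
have [J'' [cJ'' AJ'']] := LA I U oU (subset_trans (@subDsetl _ A _) AU).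
exists (J `|` J''); split; first exact: countableU.
move=> x Ax; have [[i Ji Ui]|nJx] := pselect ((\bigcup_(i in J) U i) x).
  by exists i => //; left.
by have [i Ji Ui] := AJ'' x (conj Ax nJx); exists i => //; right.
Qed.

End lindelof.

Lemma IC_closed_sets_meet_nonlindelof (X : topologicalType) :
  IC X -> closed_sets_meet_nonlindelof X.
Proof.
move=> HIC A B cA cB nA nB LAB.
apply: nA => I U oU AU; apply: contrapT => nU.
apply: nB => I' V oV BV; apply: contrapT => nV.
have [J1 [cJ1 ABJ1]] := LAB I U oU (subset_trans (@subIsetl _ A B) AU).
have [J2 [cJ2 ABJ2]] := LAB I' V oV (subset_trans (@subIsetr _ A B) BV).
have cAJ1 : closed (A `\` \bigcup_(i in J1) U i).
  by apply: closedI cA (open_closedC (bigcup_open (fun i _ => oU i))).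
have cBJ2 : closed (B `\` \bigcup_(i in J2) V i).
  by apply: closedI cB (open_closedC (bigcup_open (fun i _ => oV i))).
(* The remainders are disjoint since A `&` B lies in the first union. *)
have disj :
    (A `\` \bigcup_(i in J1) U i) `&` (B `\` \bigcup_(i in J2) V i) = set0.
  by apply/seteqP; split=> // x [[Ax nJ1x] [Bx _]]; apply/nJ1x/ABJ1.
have [L|L] := HIC _ _ cAJ1 cBJ2 disj.
- exact/nU/(lindelof_cover_setD oU AU cJ1 L).
- exact/nV/(lindelof_cover_setD oV BV cJ2 L).
Qed.

Lemma closed_sets_meet_nonlindelof_IC (X : topologicalType) :
  closed_sets_meet_nonlindelof X -> IC X.
Proof.
move=> H A B cA cB AB; apply: contrapT => /not_orP[nA nB].
by apply: (H A B cA cB nA nB); rewrite AB; exact: lindelof0.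
Qed.

Lemma zero_set_closed (R : realType) (X : topologicalType) (A : set X) :
  zero_set R A -> closed A.
Proof.
move=> [g [cg [_ ->]]]; apply: preimage_closed => [x _|]; first exact: cg.
exact: closed_eq.
Qed.

Lemma IC_zero_sets_meet_nonlindelof (R : realType) (X : topologicalType) :
  IC X -> zero_sets_meet_nonlindelof R X.
Proof.
move=> /IC_closed_sets_meet_nonlindelof H A B zA zB.
exact: H (zero_set_closed zA) (zero_set_closed zB).
Qed.

Lemma zero_sets_meet_nonlindelof_I0 (R : realType) (X : topologicalType) :
  zero_sets_meet_nonlindelof R X -> I0 R X.
Proof.
move=> H A B zA zB AB; apply: contrapT => /not_orP[nA nB].
by apply: (H A B zA zB nA nB); rewrite AB; exact: lindelof0.
Qed.

Lemma EC_real_zero_set_colindelof (R : realType) (X : topologicalType)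
    (A : set X) : EC X R -> zero_set R A -> ~ lindelof A ->
  exists Z, lindelof Z /\ ~` Z `<=` A.
Proof.
move=> [LX|ECX] zA nA.
  by case: nA; apply: subclosed_lindelof (zero_set_closed zA) LX _.
have [g [cg [_ Ag]]] := zA.
have [Z [LZ [c gZ]]] := ECX g cg.
have gc x : ~ Z x -> g x = c.
  by move=> nZx; have : [set c] (g x) by rewrite -gZ; exists x.
have [c0|c0] := eqVneq c 0.
  by exists Z; split=> // x nZx; rewrite Ag /= gc // c0.
case: nA; apply: subclosed_lindelof (zero_set_closed zA) LZ _ => x Ax.
by apply: contrapT => nZx; move: Ax c0; rewrite Ag /= gc // => ->; rewrite eqxx.
Qed.

Lemma EC_real_zero_sets_meet_nonlindelof (R : realType) (X : topologicalType) :
  EC X R -> zero_sets_meet_nonlindelof R X.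
Proof.
move=> ECX A B zA zB nA nB LAB.
have [ZA [LZA ZAA]] := EC_real_zero_set_colindelof ECX zA nA.
have [ZB [LZB ZBB]] := EC_real_zero_set_colindelof ECX zB nB.
case: nA; apply: subclosed_lindelof (zero_set_closed zA)
  (lindelofU (lindelofU LZA LZB) LAB) _.
move=> x Ax; have [ZAx|nZAx] := pselect (ZA x); first by left; left.
have [ZBx|nZBx] := pselect (ZB x); first by left; right.
by right; split; [exact: ZAA|exact: ZBB].
Qed.

Lemma I0_preimage_lindelof (R : realType) (X Y : topologicalType)
    (f : X -> Y) (C D : set Y) :
  I0 R X -> normal_space Y -> continuous f -> closed C -> closed D ->
  C `&` D = set0 -> lindelof (f @^-1` C) \/ lindelof (f @^-1` D).
Proof.
move=> I0X nY cf cC cD CD.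
have /(@uniform_separatorP Y R) [p [cp p01 pC pD]] :=
  (proj1 (@normal_separatorP R Y) nY) C D cC cD CD.
have pf01 x : 0 <= p (f x) <= 1.
  by have := p01 (p (f x)) (ex_intro2 _ _ (f x) I erefl); rewrite /= in_itv.
have cpf : continuous (p \o f).
  by move=> x; exact: continuous_comp (cf x) (cp _).
have cqf : continuous (fun x => 1 - p (f x)).
  by move=> x; apply: cvgB; [exact: cvg_cst|exact: cpf].
have zP : zero_set R ((p \o f) @^-1` [set 0]) by exists (p \o f).
have zQ : zero_set R ((fun x => 1 - p (f x)) @^-1` [set 0]).
  exists (fun x => 1 - p (f x)); split=> //; split=> // x.
  by have /andP[? ?] := pf01 x; apply/andP; split; lra.
have PQ :
    (p \o f) @^-1` [set 0] `&` (fun x => 1 - p (f x)) @^-1` [set 0] = set0.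
  apply/seteqP; split=> // x [/= ->].
  by rewrite subr0 => /eqP; rewrite oner_eq0.
have cfC : closed (f @^-1` C) by apply: preimage_closed => // x _; exact: cf.
have cfD : closed (f @^-1` D) by apply: preimage_closed => // x _; exact: cf.
have [L|L] := I0X _ _ zP zQ PQ; [left|right].
  by apply: subclosed_lindelof cfC L _ => x Cfx; apply: pC; exists (f x).
apply: subclosed_lindelof cfD L _.
by move=> x Dfx /=; rewrite (pD (p (f x))) ?subrr //; exists (f x).
Qed.

Lemma normal_I0_IC (R : realType) (X : topologicalType) :
  normal_space X -> I0 R X -> IC X.
Proof.
move=> nX I0X A B.
exact: (@I0_preimage_lindelof R X X id A B I0X nX (fun=> cvg_id)).
Qed.

Definition ball_separated {R : numDomainType} {Y : pseudoMetricType R}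
    (e : R) (E : set Y) :=
  forall a b, E a -> E b -> a <> b -> ~ ball a e b.

Section ball_separated.
Context {R : realType} {Y : pseudoMetricType R}.
Implicit Types (D E S : set Y) (y : Y) (r s : R).

Lemma ball_half_subset_interior y r : 0 < r -> ball y (r / 2) `<=` (ball y r)°.
Proof.
move=> r0 z yz; apply/nbhs_ballP; exists (r / 2); first by rewrite /= divr_gt0.
by move=> w /= zw; exact: ball_split yz zw.
Qed.

Lemma exists_separated_net S s : 0 < s ->
  exists D, [/\ D `<=` S, ball_separated s D &
              S `<=` \bigcup_(a in D) ball a s].
Proof.
move=> s0.
have [D [DS Dsep Dmax]] := exists_maximal_pairwise S (fun a b => ~ ball a s b).
exists D; split=> // y Sy; apply: contrapT => ny; apply: (ny); exists y.
  apply: Dmax => // a Da _; split=> [ay|ya]; apply: ny; exists a => //.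
  exact: ball_sym.
exact: ballxx.
Qed.

Lemma separated_closure_setD s D E : 0 < s -> ball_separated s D -> E `<=` D ->
  closure E `&` closure (D `\` E) = set0.
Proof.
move=> s0 Dsep ED; apply/seteqP; split=> // z [clE clDE].
have s2 : 0 < s / 2 by rewrite divr_gt0.
have [a [Ea za]] := clE _ (nbhsx_ballx z _ s2).
have [b [[Db nEb] zb]] := clDE _ (nbhsx_ballx z _ s2).
apply: (Dsep a b (ED a Ea) Db); first by move=> ab; apply: nEb; rewrite -ab.
exact: ball_split (ball_sym za) zb.
Qed.

End ball_separated.

Section I0_metric.
Context {R : realType} {X : topologicalType} {Y : pseudoMetricType R}.
Variable f : X -> Y.
Hypothesis cf : continuous f.

Lemma separated_preimage_closure_not_lindelof s E : 0 < s ->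
  ball_separated s E -> E `<=` range f -> ~ countable E ->
  ~ lindelof (f @^-1` closure E).
Proof.
move=> s0 Esep Ef nE L; apply: nE.
have s2 : 0 < s / 2 by rewrite divr_gt0.
have s4 : 0 < s / 2 / 2 by rewrite divr_gt0.
pose U a := f @^-1` (ball a (s / 2))°.
have oU a : open (U a).
  by apply: (proj1 (continuousP f) cf); exact: open_interior.
have [|J [cJ EJ]] := L Y U oU.
  move=> x clEx; have [a [Ea xa]] := clEx _ (nbhsx_ballx (f x) _ s4).
  by exists a => //; apply: ball_half_subset_interior => //; exact: ball_sym.
have E_near_J : E `<=` \bigcup_(j in J) (E `&` ball j (s / 2)).
  move=> b Eb; have [x _ xb] := Ef b Eb; rewrite -xb in Eb *.
  by have [j Jj /interior_subset jx] := EJ x (subset_closure Eb); exists j.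
apply: sub_countable (subset_card_le E_near_J) _.
apply: bigcup_countable => // j _.
apply: subset1_countable => a b [Ea ja] [Eb jb].
apply: contrapT => ab; apply: (Esep a b Ea Eb ab).
exact: ball_split (ball_sym ja) jb.
Qed.

Hypotheses (I0X : I0 R X) (nLX : ~ lindelof [set: X]).

Lemma lindelof_preimage_outside_ball r : 0 < r ->
  exists y, lindelof (f @^-1` ~` (ball y r)°).
Proof.
move=> r0; apply: contrapT; rewrite -forallNP => nLr.
have r2 : 0 < r / 2 by rewrite divr_gt0.
set s := r / 2 / 2; have s0 : 0 < s by rewrite divr_gt0.
have nY := @pseudometric_normal R Y.
have L_closed_ball y : lindelof (f @^-1` closed_ball y s).
  have disj : closed_ball y s `&` ~` (ball y r)° = set0.
    apply/seteqP; split=> // z [/(subset_closure_half r2) yz]; apply.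
    exact: ball_half_subset_interior.
  have cC := open_closedC (@open_interior _ (ball y r)).
  have cB := @closed_ball_closed _ _ y s.
  by have [//|/nLr] := I0_preimage_lindelof I0X nY cf cB cC disj.
have [D [Df Dsep Dnet]] := exists_separated_net (range f) s0.
have [cD|ncD] := pselect (countable D).
  have := bigcup_lindelof cD (fun a _ => L_closed_ball a).
  move=> /(subclosed_lindelof closedT) L; apply/nLX/L.
  move=> x _; have [a Da ax] := Dnet (f x) (imageT f x).
  by exists a => //; exact: subset_closed_ball.
have [E [ED nE nDE]] := split_uncountable ncD.
have Esep : ball_separated s E by move=> a b Ea Eb; apply: Dsep; exact: ED.
have DEsep : ball_separated s (D `\` E).
  by move=> a b [Da _] [Db _]; exact: Dsep.
have [L|L] := I0_preimage_lindelof I0X nY cf (@closed_closure _ E)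
  (@closed_closure _ (D `\` E)) (separated_closure_setD s0 Dsep ED).
- by apply: (separated_preimage_closure_not_lindelof s0 Esep) L => // a /ED /Df.
- by apply: (separated_preimage_closure_not_lindelof s0 DEsep) L => // a [/Df].
Qed.

Lemma I0_nonlindelof_EC (hY : hausdorff_space Y) :
  exists Z : set X, lindelof Z /\ exists y : Y, f @` (~` Z) = [set y].
Proof.
pose r (n : nat) : R := n.+1%:R^-1 / 2.
have r0 n : 0 < r n by rewrite divr_gt0.
have [c Lc] := choice (fun n => lindelof_preimage_outside_ball (r0 n)).
pose Z := \bigcup_(n in [set: nat]) f @^-1` ~` (ball (c n) (r n))°.
have LZ : lindelof Z := bigcup_lindelof (countableP _) (fun n _ => Lc n).
have near_c x n : ~ Z x -> ball (c n) (r n) (f x).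
  move=> nZx; apply: interior_subset; apply: contrapT => ncx.
  by apply: nZx; exists n.
have [x0 nZx0] : exists x0, ~ Z x0.
  apply: contrapT => nx; apply/nLX/(subclosed_lindelof closedT LZ) => x _.
  by apply: contrapT => nZx; apply: nx; exists x.
exists Z; split=> //; exists (f x0); apply/seteqP; split; last first.
  by move=> _ ->; exists x0.
move=> _ [x nZx <-]; apply/esym/(close_eq hY); rewrite ball_close => eps.
have [N _ /(_ N (leqnn N)) Neps] := near_infty_natSinv_lt eps.
apply: le_ball (ltW Neps) _ _.
exact: ball_split (ball_sym (near_c x0 N nZx0)) (near_c x N nZx).
Qed.

End I0_metric.

Lemma I0_EC_all_metric (R : realType) (X : topologicalType) :
  I0 R X -> EC_all_metric R X.
Proof.
move=> I0X Y hY; have [LX|nLX] := pselect (lindelof [set: X]); first by left.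
by right=> f cf; exact: I0_nonlindelof_EC.
Qed.

Lemma EC_all_metric_EC_real (R : realType) (X : topologicalType) :
  EC_all_metric R X -> EC X R.
Proof. by move=> ECY; exact: ECY R (@Rhausdorff R). Qed.

Theorem theorem3p3 (R : realType) (X : topologicalType) (hX : hausdorff_space X) :
  let P1 := EC X R in
  let P2 := EC_all_metric R X in
  let P3a := I0 R X in
  let P3b := zero_sets_meet_nonlindelof R X in
  let P4a := IC X in
  let P4b := closed_sets_meet_nonlindelof X in
  ((P1 <-> P2) /\ (P2 <-> P3a) /\ (P3b -> P3a) /\ (P4a -> P3b) /\ (P4a <-> P4b)) /\
  (tychonoff_space R X -> (P3a <-> P3b)) /\
  (normal_space X -> (P1 <-> P4a) /\ (P1 <-> P3b) /\ (P1 <-> P4b)).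
Proof.
(* (3a) -> (2) -> (1) -> (3b) holds for every space. *)
move=> P1 P2 P3a P3b P4a P4b.
have P1_P3b : P1 -> P3b := @EC_real_zero_sets_meet_nonlindelof R X.
have P3b_P3a : P3b -> P3a := @zero_sets_meet_nonlindelof_I0 R X.
have P3a_P2 : P3a -> P2 := @I0_EC_all_metric R X.
have P2_P1 : P2 -> P1 := @EC_all_metric_EC_real R X.
have P4a_P3b : P4a -> P3b := @IC_zero_sets_meet_nonlindelof R X.
have P4a_P4b : P4a -> P4b := @IC_closed_sets_meet_nonlindelof X.
have P4b_P4a : P4b -> P4a := @closed_sets_meet_nonlindelof_IC X.
have P3a_P4a : normal_space X -> P3a -> P4a := @normal_I0_IC R X.
tauto.
Qed.
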